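(* Let $\mathbf A,\mathbf B$ be complete perfect DqRAs and $h:\mathbf A\to\mathbf B$ a complete homomorphism. Define $h_+:J^\infty(\mathbf B)\to J^\infty(\mathbf A)$ by $h_+(b)=\bigwedge\{a\in A\mid b\leqslant h(a)\}$. Then: (i) $h_+$ is a DqRA-frame morphism from $\mathbf B_+$ to $\mathbf A_+$, i.e. in addition to being a DInFL-frame morphism it satisfies $h_+(b^\neg)=h_+(b)^\neg$ for all $b\in J^\infty(\mathbf B)$; (ii) if $h$ is surjective then $h_+$ is an order-embedding; (iii) if $h$ is injective then $h_+$ is surjective.
   Context: A DqRA is $(A,\wedge,\vee,\cdot,1,\sim,-,\neg)$ with $(A,\wedge,\vee)$ a distributive lattice, $(A,\cdot,1)$ a monoid, $a\cdot b\leqslant c\iff a\leqslant -(b\cdot{\sim}c)\iff b\leqslant{\sim}(-c\cdot a)$, $\neg\neg a=a$, $\neg(a\wedge b)=\neg a\vee\neg b$, and $\neg(a\cdot b)=\neg a+\neg b$ where $a+b=-({\sim}b\cdot{\sim}a)$. Complete perfect: complete, every element the join of completely join-irreducibles ($J^\infty$) below it and meet of completely meet-irreducibles above it. A complete homomorphism preserves all operations and arbitrary joins and meets. $\kappa(j)=\bigvee\{a\mid j\not\leqslant a\}$. $\mathbf A_+=(J^\infty(\mathbf A),I_1,\preccurlyeq,\circ,{}^\sim,{}^-,{}^\neg)$ with $I_1=\{i\in J^\infty(\mathbf A)\mid i\leqslant 1\}$, $a\preccurlyeq b$ iff $b\leqslant a$, $c\in a\circ b$ iff $c\leqslant a\cdot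 b$, $a^\sim={\sim}\kappa(a)$, $a^-=-\kappa(a)$, $a^\neg=\neg\kappa(a)$. A DInFL-frame morphism between $(W_1,I_1,\preccurlyeq_1,\circ_1,{}^{\sim_1},{}^{-_1})$ and $(W_2,I_2,\preccurlyeq_2,\circ_2,{}^{\sim_2},{}^{-_2})$ is $f:W_1\to W_2$ with, for all $x,y,z\in W_1$, $u,v\in W_2$: (M1) $x\preccurlyeq_1 y\Rightarrow f(x)\preccurlyeq_2 f(y)$; (M2) $z\in x\circ_1 y\Rightarrow f(z)\in f(x)\circ_2 f(y)$; (M3) if $f(z)\in u\circ_2 v$ then there exist $x,y$ with $u\preccurlyeq_2 f(x)$, $v\preccurlyeq_2 f(y)$, $z\in x\circ_1 y$; (M4) $f(x^{\sim_1})=f(x)^{\sim_2}$; (M5) $f(x^{-_1})=f(x)^{-_2}$; (M6) $I_1=f^{-1}[I_2]$. A DqRA-frame morphism additionally satisfies (M7) $f(x^{\neg_1})=f(x)^{\neg_2}$. *)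

Set Implicit Arguments.

Record DqRA := {
  car :> Type;
  dmeet : car -> car -> car;
  djoin : car -> car -> car;
  dmul  : car -> car -> car;
  done  : car;
  dtl   : car -> car;
  dmi   : car -> car;
  dneg  : car -> car;
  meetA : forall a b c, dmeet a (dmeet b c) = dmeet (dmeet a b) c;
  joinA : forall a b c, djoin a (djoin b c) = djoin (djoin a b) c;
  meetC : forall a b, dmeet a b = dmeet b a;
  joinC : forall a b, djoin a b = djoin b a;
  meet_absorb : forall a b, dmeet a (djoin a b) = a;
  join_absorb : forall a b, djoin a (dmeet a b) = a;
  meet_distr : forall a b c, dmeet a (djoin b c) = djoin (dmeet a b) (dmeet a c);
  mulA : forall a b c, dmul a (dmul b c) = dmul (dmul a b) c;
  mul1l : forall a, dmul done a = a;
  mul1r : forall a, dmul a done = a;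
  (* residuation: a.b <= c <-> a <= -(b.~c) <-> b <= ~(-c.a), where x <= y := x /\ y = x *)
  resid1 : forall a b c, dmeet (dmul a b) c = dmul a b <-> dmeet a (dmi (dmul b (dtl c))) = a;
  resid2 : forall a b c, dmeet (dmul a b) c = dmul a b <-> dmeet b (dtl (dmul (dmi c) a)) = b;
  negK : forall a, dneg (dneg a) = a;
  neg_meet : forall a b, dneg (dmeet a b) = djoin (dneg a) (dneg b);
  (* ¬(a.b) = ¬a + ¬b, with a + b := -(~b . ~a) *)
  neg_mul : forall a b, dneg (dmul a b) = dmi (dmul (dtl (dneg b)) (dtl (dneg a)))
}.

Arguments dmeet {d}. Arguments djoin {d}. Arguments dmul {d}. Arguments dtl {d}.
Arguments dmi {d}. Arguments dneg {d}.

Definition dle {A : DqRA} (a b : A) : Prop := dmeet a b = a.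

Definition is_lub {A : DqRA} (S : A -> Prop) (x : A) : Prop :=
  (forall s, S s -> dle s x) /\ (forall u, (forall s, S s -> dle s u) -> dle x u).
Definition is_glb {A : DqRA} (S : A -> Prop) (x : A) : Prop :=
  (forall s, S s -> dle x s) /\ (forall l, (forall s, S s -> dle l s) -> dle l x).

Record CDqRA := {
  dq :> DqRA;
  bigjoin : (dq -> Prop) -> dq;
  bigmeet : (dq -> Prop) -> dq;
  bigjoinP : forall S, is_lub S (bigjoin S);
  bigmeetP : forall S, is_glb S (bigmeet S)
}.

Arguments bigjoin {c}. Arguments bigmeet {c}.

Definition Jinf {A : CDqRA} (j : A) : Prop :=
  forall S : A -> Prop, j = @bigjoin A S -> S j.
Definition Minf {A : CDqRA} (m : A) : Prop :=
  forall S : A -> Prop, m = @bigmeet A S -> S m.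

Definition perfect (A : CDqRA) : Prop :=
  forall a : A,
    a = @bigjoin A (fun j => Jinf j /\ dle j a) /\
    a = @bigmeet A (fun m => Minf m /\ dle a m).

Definition image {A B : CDqRA} (h : A -> B) (S : A -> Prop) : B -> Prop :=
  fun b => exists a, S a /\ b = h a.

Definition complete_hom {A B : CDqRA} (h : A -> B) : Prop :=
  (forall a b, h (dmeet a b) = dmeet (h a) (h b)) /\
  (forall a b, h (djoin a b) = djoin (h a) (h b)) /\
  (forall a b, h (dmul a b) = dmul (h a) (h b)) /\
  h (done A) = done B /\
  (forall a, h (dtl a) = dtl (h a)) /\
  (forall a, h (dmi a) = dmi (h a)) /\
  (forall a, h (dneg a) = dneg (h a)) /\
  (forall S, h (@bigjoin A S) = @bigjoin B (image h S)) /\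
  (forall S, h (@bigmeet A S) = @bigmeet B (image h S)).

Definition kappa {A : CDqRA} (j : A) : A := @bigjoin A (fun a => ~ dle j a).

(** The dual frame A_+ = (J^oo(A), I_1, ≼, ∘, ^~, ^-, ^¬), with carrier J^oo(A)
    represented by the predicate Jinf on A. *)
Definition frI {A : CDqRA} (i : A) : Prop := Jinf i /\ dle i (done A).
Definition frle {A : CDqRA} (a b : A) : Prop := dle b a.
Definition frcomp {A : CDqRA} (c a b : A) : Prop := dle c (dmul a b). (* c ∈ a ∘ b *)
Definition frtl {A : CDqRA} (a : A) : A := dtl (kappa a).
Definition frmi {A : CDqRA} (a : A) : A := dmi (kappa a).
Definition frneg {A : CDqRA} (a : A) : A := dneg (kappa a).

Definition DInFL_frame_morphism {A B : CDqRA} (f : A -> B) : Prop :=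
  (forall x, Jinf x -> Jinf (f x)) /\
  (forall x y, Jinf x -> Jinf y -> frle x y -> frle (f x) (f y)) /\
  (forall x y z, Jinf x -> Jinf y -> Jinf z -> frcomp z x y -> frcomp (f z) (f x) (f y)) /\
  (forall z u v, Jinf z -> Jinf u -> Jinf v -> frcomp (f z) u v ->
     exists x y, Jinf x /\ Jinf y /\ frle u (f x) /\ frle v (f y) /\ frcomp z x y) /\
  (forall x, Jinf x -> f (frtl x) = frtl (f x)) /\
  (forall x, Jinf x -> f (frmi x) = frmi (f x)) /\
  (forall x, Jinf x -> (frI x <-> frI (f x))).

Definition DqRA_frame_morphism {A B : CDqRA} (f : A -> B) : Prop :=
  DInFL_frame_morphism f /\
  (forall x, Jinf x -> f (frneg x) = frneg (f x)).

Definition hplus {A B : CDqRA} (h : A -> B) (b : B) : A :=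
  @bigmeet A (fun a => dle b (h a)).

(** h is a complete lattice homomorphism, so h₊ is its lower adjoint:
    h₊ b ≤ a ⟺ b ≤ h a.  In a perfect distributive lattice every completely
    join-irreducible j is completely join-prime and κ(j) is the largest element
    not above j, i.e. y ≤ κ(j) ⟺ j ≰ y.  These two facts reduce every frame
    condition to a chain of equivalences: h₊ preserves joins and hence J^∞
    (join-primeness in B), (M3) follows by writing h u and h v as joins of
    completely join-irreducibles and distributing the product over them, and
    (M4), (M5), (M7) follow because ~, - and ¬ are antitone maps with
    ~c ≤ a ⟺ -a ≤ c, -c ≤ a ⟺ ~a ≤ c and ¬c ≤ a ⟺ ¬a ≤ c that commute with h.
    If h is onto then h ∘ h₊ = id, and if h is one-to-one then h₊ ∘ h = id. *)

From Stdlib Require Import Classical.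

Section Lattice.
Context {D : DqRA}.
Implicit Types a b c x y : D.

Lemma meet_idem a : dmeet a a = a.
Proof. pose proof (meet_absorb _ a (dmeet a a)) as H. rewrite join_absorb in H. exact H. Qed.

Lemma le_refl a : dle a a.
Proof. apply meet_idem. Qed.

Lemma le_trans {a b c} : dle a b -> dle b c -> dle a c.
Proof. unfold dle; intros Hab Hbc. rewrite <- Hab, <- meetA, Hbc. reflexivity. Qed.

Lemma le_antisym a b : dle a b -> dle b a -> a = b.
Proof. unfold dle; intros Hab Hba. rewrite <- Hab, meetC. exact Hba. Qed.

Lemma le_ext a b : (forall c, dle a c <-> dle b c) -> a = b.
Proof. intro H. apply le_antisym; apply H, le_refl. Qed.

Lemma meet_lb1 a b : dle (dmeet a b) a.
Proof. unfold dle. rewrite (meetC _ a b), <- meetA, meet_idem. reflexivity. Qed.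

Lemma meet_lb2 a b : dle (dmeet a b) b.
Proof. unfold dle. rewrite <- meetA, meet_idem. reflexivity. Qed.

Lemma meet_glb a b c : dle c a -> dle c b -> dle c (dmeet a b).
Proof. unfold dle; intros Ha Hb. rewrite meetA, Ha, Hb. reflexivity. Qed.

Lemma le_joinE a b : dle a b <-> djoin a b = b.
Proof.
  unfold dle; split; intro H.
  - rewrite <- H, joinC, meetC, join_absorb. reflexivity.
  - rewrite <- H, meet_absorb. reflexivity.
Qed.

Lemma join_ub1 a b : dle a (djoin a b).
Proof. apply meet_absorb. Qed.

Lemma join_ub2 a b : dle b (djoin a b).
Proof. rewrite joinC. apply meet_absorb. Qed.

Lemma join_lub a b c : dle a c -> dle b c -> dle (djoin a b) c.
Proof. rewrite !le_joinE; intros Ha Hb. rewrite <- joinA, Hb, Ha. reflexivity. Qed.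

Lemma join_meet_distr_le a x y :
  dle (dmeet (djoin a x) (djoin a y)) (djoin a (dmeet x y)).
Proof.
  rewrite meet_distr, (meetC _ (djoin a x) a), meet_absorb,
    (meetC _ (djoin a x) y), meet_distr.
  apply join_lub; [apply join_ub1|]. apply join_lub.
  - eapply le_trans; [apply meet_lb2|apply join_ub1].
  - eapply le_trans; [|apply join_ub2]. rewrite meetC. apply le_refl.
Qed.

End Lattice.

Section Residuation.
Context {D : DqRA}.
Implicit Types a b c x y : D.

Lemma mul_monol a a' b : dle a a' -> dle (dmul a b) (dmul a' b).
Proof.
  intro H. apply (resid1 _ a b). apply (le_trans H).
  apply (resid1 _ a' b), le_refl.
Qed.

Lemma mul_monor a b b' : dle b b' -> dle (dmul a b) (dmul a b').
Proof.
  intro H. apply (resid2 _ a b). apply (le_trans H).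
  apply (resid2 _ a b'), le_refl.
Qed.

Lemma tl_miK c : dtl (dmi c) = c.
Proof.
  pose proof (fun b => resid2 _ (done D) b c) as H.
  apply le_antisym.
  - specialize (H (dtl (dmi c))). rewrite mul1l, mul1r in H. apply H, le_refl.
  - specialize (H c). rewrite mul1l, mul1r in H. apply H, le_refl.
Qed.

Lemma mi_tlK c : dmi (dtl c) = c.
Proof.
  pose proof (fun b => resid1 _ b (done D) c) as H.
  apply le_antisym.
  - specialize (H (dmi (dtl c))). rewrite mul1l, mul1r in H. apply H, le_refl.
  - specialize (H c). rewrite mul1l, mul1r in H. apply H, le_refl.
Qed.

(* ~1 and -1 play the role of the constant 0 of an InFL. *)
Lemma le_tl_mul b y : dle b (dtl y) <-> dle (dmul y b) (dtl (done D)).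
Proof. pose proof (resid2 _ y b (dtl (done D))) as H. rewrite mi_tlK, mul1l in H. tauto. Qed.

Lemma le_mi_mul x y : dle x (dmi y) <-> dle (dmul x y) (dmi (done D)).
Proof. pose proof (resid1 _ x y (dmi (done D))) as H. rewrite tl_miK, mul1r in H. tauto. Qed.

Lemma tl_anti a b : dle a b -> dle (dtl b) (dtl a).
Proof.
  intro H. apply (proj2 (le_tl_mul _ _)). eapply le_trans; [apply mul_monol, H|].
  apply (proj1 (le_tl_mul _ _)), le_refl.
Qed.

Lemma mi_anti a b : dle a b -> dle (dmi b) (dmi a).
Proof.
  intro H. apply (proj2 (le_mi_mul _ _)). eapply le_trans; [apply mul_monor, H|].
  apply (proj1 (le_mi_mul _ _)), le_refl.
Qed.

Lemma tl_le_mi c a : dle (dtl c) a <-> dle (dmi a) c.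
Proof.
  split; intro H.
  - rewrite <- (mi_tlK c). apply mi_anti, H.
  - rewrite <- (tl_miK a). apply tl_anti, H.
Qed.

Lemma mi_le_tl c a : dle (dmi c) a <-> dle (dtl a) c.
Proof.
  split; intro H.
  - rewrite <- (tl_miK c). apply tl_anti, H.
  - rewrite <- (mi_tlK a). apply mi_anti, H.
Qed.

Lemma neg_anti a b : dle a b -> dle (dneg b) (dneg a).
Proof. unfold dle. intro H. rewrite <- H, neg_meet. apply join_ub2. Qed.

Lemma neg_le_neg c a : dle (dneg c) a <-> dle (dneg a) c.
Proof.
  split; intro H.
  - rewrite <- (negK _ c). apply neg_anti, H.
  - rewrite <- (negK _ a). apply neg_anti, H.
Qed.

End Residuation.

Section Complete.
Context {A : CDqRA}.
Implicit Types (S T : A -> Prop) (a j m x y : A).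

Lemma bigjoin_ub S a : S a -> dle a (bigjoin S).
Proof. apply (proj1 (bigjoinP A S)). Qed.

Lemma bigjoin_least S a : (forall s, S s -> dle s a) -> dle (bigjoin S) a.
Proof. apply (proj2 (bigjoinP A S)). Qed.

Lemma bigmeet_lb S a : S a -> dle (bigmeet S) a.
Proof. apply (proj1 (bigmeetP A S)). Qed.

Lemma bigmeet_greatest S a : (forall s, S s -> dle a s) -> dle a (bigmeet S).
Proof. apply (proj2 (bigmeetP A S)). Qed.

Lemma mul_bigjoinl T c :
  dle (dmul (bigjoin T) c) (bigjoin (fun w => exists x, T x /\ w = dmul x c)).
Proof.
  apply resid1, bigjoin_least. intros s Hs.
  apply resid1, bigjoin_ub. eauto.
Qed.

Lemma mul_bigjoinr T c :
  dle (dmul c (bigjoin T)) (bigjoin (fun w => exists y, T y /\ w = dmul c y)).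
Proof.
  apply resid2, bigjoin_least. intros s Hs.
  apply resid2, bigjoin_ub. eauto.
Qed.

Lemma Minf_meet_prime {m x y} :
  Minf m -> dle (dmeet x y) m -> dle x m \/ dle y m.
Proof.
  intros Hm Hxy. apply NNPP. intro Hn.
  set (cover := bigmeet (fun z => dle m z /\ z <> m)).
  assert (Hcover : cover <> m).
  { intro E. destruct (Hm _ (eq_sym E)) as [_ Hne]. exact (Hne eq_refl). }
  assert (Hx : dle cover (djoin m x)).
  { apply bigmeet_lb. split; [apply join_ub1|].
    intro E. apply Hn. left. rewrite <- E. apply join_ub2. }
  assert (Hy : dle cover (djoin m y)).
  { apply bigmeet_lb. split; [apply join_ub1|].
    intro E. apply Hn. right. rewrite <- E. apply join_ub2. }
  apply Hcover, le_antisym.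
  - eapply le_trans; [apply meet_glb; [exact Hx|exact Hy]|].
    eapply le_trans; [apply join_meet_distr_le|].
    apply join_lub; [apply le_refl|exact Hxy].
  - apply bigmeet_greatest. intros s [Hs _]. exact Hs.
Qed.

Hypothesis perfA : perfect A.

(* The join of everything strictly below j is a proper element below j;
   a completely meet-irreducible element above it but not above j bounds
   every element not above j, by meet-primeness. *)
Lemma kappa_not_above {j} : Jinf j -> ~ dle j (kappa j).
Proof.
  intro Hj.
  set (below := bigjoin (fun y => dle y j /\ y <> j)).
  assert (Hbelow : dle below j) by (apply bigjoin_least; intros s [Hs _]; exact Hs).
  assert (Hproper : below <> j).
  { intro E. destruct (Hj _ (eq_sym E)) as [_ Hne]. exact (Hne eq_refl). }
  assert (Hsep : exists m, (Minf m /\ dle below m) /\ ~ dle j m).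
  { apply NNPP. intro Hn. apply Hproper, le_antisym; [exact Hbelow|].
    rewrite (proj2 (perfA below)). apply bigmeet_greatest. intros s Hs.
    apply NNPP. intro C. apply Hn. exists s. auto. }
  destruct Hsep as [m [[Hm Hbm] Hjm]].
  intro Hk. apply Hjm. eapply le_trans; [exact Hk|].
  apply bigjoin_least. intros x Hx.
  assert (Hxj : dle (dmeet x j) m).
  { eapply le_trans; [|exact Hbm]. apply bigjoin_ub. split; [apply meet_lb2|].
    intro E. apply Hx. rewrite <- E. apply meet_lb1. }
  destruct (Minf_meet_prime Hm Hxj) as [Hxm|Hjm']; [exact Hxm|contradiction].
Qed.

Lemma le_kappa {j} y : Jinf j -> dle y (kappa j) <-> ~ dle j y.
Proof.
  intro Hj. split.
  - intros Hy Hjy. apply (kappa_not_above Hj). eapply le_trans; eassumption.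
  - intro Hy. apply bigjoin_ub. exact Hy.
Qed.

Lemma Jinf_le_bigjoin {j T} : Jinf j -> dle j (bigjoin T) -> exists t, T t /\ dle j t.
Proof.
  intros Hj HT. apply NNPP. intro Hn.
  apply (kappa_not_above Hj). eapply le_trans; [exact HT|].
  apply bigjoin_least. intros s Hs. apply le_kappa; [exact Hj|].
  intro Hjs. apply Hn. eauto.
Qed.

End Complete.

Section LowerAdjoint.
Variables (A B : CDqRA) (h : A -> B).
Hypothesis hom : complete_hom h.

Lemma hom_meet a a' : h (dmeet a a') = dmeet (h a) (h a').
Proof. destruct hom as (H & _); apply H. Qed.

Lemma hom_mul a a' : h (dmul a a') = dmul (h a) (h a').
Proof. destruct hom as (_ & _ & H & _); apply H. Qed.

Lemma hom_one : h (done A) = done B.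
Proof. destruct hom as (_ & _ & _ & H & _); apply H. Qed.

Lemma hom_tl a : h (dtl a) = dtl (h a).
Proof. destruct hom as (_ & _ & _ & _ & H & _); apply H. Qed.

Lemma hom_mi a : h (dmi a) = dmi (h a).
Proof. destruct hom as (_ & _ & _ & _ & _ & H & _); apply H. Qed.

Lemma hom_neg a : h (dneg a) = dneg (h a).
Proof. destruct hom as (_ & _ & _ & _ & _ & _ & H & _); apply H. Qed.

Lemma hom_bigjoin S : h (bigjoin S) = bigjoin (image h S).
Proof. destruct hom as (_ & _ & _ & _ & _ & _ & _ & H & _); apply H. Qed.

Lemma hom_bigmeet S : h (bigmeet S) = bigmeet (image h S).
Proof. destruct hom as (_ & _ & _ & _ & _ & _ & _ & _ & H); apply H. Qed.

Lemma hom_mono {a a'} : dle a a' -> dle (h a) (h a').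
Proof. unfold dle. intro H. rewrite <- hom_meet, H. reflexivity. Qed.

Lemma hplus_le b a : dle (hplus h b) a <-> dle b (h a).
Proof.
  split; intro H.
  - eapply le_trans; [|apply (hom_mono H)].
    unfold hplus. rewrite hom_bigmeet.
    apply bigmeet_greatest. intros s [a' [Ha' ->]]. exact Ha'.
  - apply bigmeet_lb. exact H.
Qed.

Lemma le_h_hplus b : dle b (h (hplus h b)).
Proof. apply hplus_le, le_refl. Qed.

Lemma hplus_mono b b' : dle b b' -> dle (hplus h b) (hplus h b').
Proof. intro H. apply hplus_le. eapply le_trans; [exact H|apply le_h_hplus]. Qed.

Lemma hplus_bigjoin T : hplus h (bigjoin T) = bigjoin (image (hplus h) T).
Proof.
  apply le_antisym.
  - apply hplus_le, bigjoin_least. intros t Ht.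
    eapply le_trans; [apply le_h_hplus|]. apply hom_mono, bigjoin_ub. exists t. auto.
  - apply bigjoin_least. intros s [t [Ht ->]]. apply hplus_mono, bigjoin_ub, Ht.
Qed.

Lemma hplus_comp x y z :
  frcomp z x y -> frcomp (hplus h z) (hplus h x) (hplus h y).
Proof.
  unfold frcomp. intro H. apply hplus_le. rewrite hom_mul.
  eapply le_trans; [exact H|]. eapply le_trans.
  - apply mul_monol, le_h_hplus.
  - apply mul_monor, le_h_hplus.
Qed.

Lemma h_hplus_of_surj : (forall b, exists a, h a = b) -> forall b, h (hplus h b) = b.
Proof.
  intros Hsurj b. destruct (Hsurj b) as [a <-].
  apply le_antisym; [apply hom_mono, hplus_le, le_refl|apply le_h_hplus].
Qed.

Lemma hplus_order_embedding_of_surj :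
  (forall b, exists a, h a = b) -> forall x y, frle x y <-> frle (hplus h x) (hplus h y).
Proof.
  unfold frle. intros Hsurj x y. split; [apply hplus_mono|].
  intro H. rewrite <- (h_hplus_of_surj Hsurj x). apply hplus_le, H.
Qed.

Lemma hplus_h_of_inj : (forall a1 a2, h a1 = h a2 -> a1 = a2) -> forall a, hplus h (h a) = a.
Proof.
  intros Hinj a. apply le_antisym; [apply hplus_le, le_refl|].
  apply bigmeet_greatest. intros s Hs. apply Hinj. rewrite hom_meet. exact Hs.
Qed.

Hypothesis perfB : perfect B.

Lemma hplus_Jinf {x} : Jinf x -> Jinf (hplus h x).
Proof.
  intros Hx S E.
  pose proof (le_h_hplus x) as Hxh. rewrite E, hom_bigjoin in Hxh.
  destruct (Jinf_le_bigjoin perfB Hx Hxh) as [t [[s [Hs ->]] Hxs]].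
  replace (hplus h x) with s; [exact Hs|].
  apply le_antisym.
  - rewrite E. apply bigjoin_ub, Hs.
  - apply hplus_le, Hxs.
Qed.

Lemma hplus_comp_lift z u v :
  Jinf z -> frcomp (hplus h z) u v ->
  exists x y, Jinf x /\ Jinf y /\ frle u (hplus h x) /\ frle v (hplus h y) /\ frcomp z x y.
Proof.
  unfold frcomp, frle. intros Hz Huv.
  apply hplus_le in Huv. rewrite hom_mul in Huv.
  rewrite (proj1 (perfB (h u))) in Huv.
  destruct (Jinf_le_bigjoin perfB Hz (le_trans Huv (mul_bigjoinl _ _)))
    as [w [[x [[Hx Hxu] ->]] Hzx]].
  rewrite (proj1 (perfB (h v))) in Hzx.
  destruct (Jinf_le_bigjoin perfB Hz (le_trans Hzx (mul_bigjoinr _ _)))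
    as [w [[y [[Hy Hyv] ->]] Hzy]].
  exists x, y. repeat split; try apply hplus_le; assumption.
Qed.

Lemma hplus_frI x : Jinf x -> frI x <-> frI (hplus h x).
Proof.
  unfold frI. intro Hx. rewrite hplus_le, hom_one.
  pose proof (hplus_Jinf Hx). tauto.
Qed.

Lemma hplus_onto_Jinf_of_inj :
  (forall a1 a2, h a1 = h a2 -> a1 = a2) ->
  forall a, Jinf a -> exists b, Jinf b /\ hplus h b = a.
Proof.
  intros Hinj a Ha.
  pose proof (hplus_h_of_inj Hinj a) as E.
  rewrite (proj1 (perfB (h a))), hplus_bigjoin in E.
  destruct (Ha _ (eq_sym E)) as [b [[Hb _] Eb]].
  exists b. auto.
Qed.

Hypothesis perfA : perfect A.

(* One argument covers ~, - and ¬: each is an antitone map f with a partner g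
   such that f c <= a iff g a <= c (g = -, ~, ¬ respectively). *)
Lemma hplus_kappa_antitone (f g : forall D : DqRA, D -> D) :
  (forall (D : DqRA) (c a : D), dle (f D c) a <-> dle (g D a) c) ->
  (forall a, h (g A a) = g B (h a)) ->
  forall x, Jinf x -> hplus h (f B (kappa x)) = f A (kappa (hplus h x)).
Proof.
  intros Hfg Hgh x Hx. apply le_ext. intro a.
  rewrite hplus_le, Hfg, (le_kappa perfB _ Hx), <- Hgh, <- hplus_le,
    <- (le_kappa perfA _ (hplus_Jinf Hx)), Hfg.
  reflexivity.
Qed.

Lemma hplus_DqRA_frame_morphism : DqRA_frame_morphism (hplus h).
Proof.
  refine (conj (conj _ (conj _ (conj _ (conj _ (conj _ (conj _ _)))))) _).
  - exact @hplus_Jinf.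
  - intros x y _ _. apply hplus_mono.
  - intros x y z _ _ _. apply hplus_comp.
  - intros z u v Hz _ _. apply hplus_comp_lift, Hz.
  - exact (hplus_kappa_antitone (@dtl) (@dmi) (@tl_le_mi) hom_mi).
  - exact (hplus_kappa_antitone (@dmi) (@dtl) (@mi_le_tl) hom_tl).
  - exact @hplus_frI.
  - exact (hplus_kappa_antitone (@dneg) (@dneg) (@neg_le_neg) hom_neg).
Qed.

End LowerAdjoint.

Theorem mainTheorem16 (A B : CDqRA) (h : A -> B) :
  perfect A -> perfect B -> complete_hom h ->
  DqRA_frame_morphism (hplus h) /\
  ((forall b : B, exists a : A, h a = b) ->
     forall x y : B, Jinf x -> Jinf y -> (frle x y <-> frle (hplus h x) (hplus h y))) /\
  ((forall a1 a2 : A, h a1 = h a2 -> a1 = a2) ->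
     forall a : A, Jinf a -> exists b : B, Jinf b /\ hplus h b = a).
Proof.
  intros perfA perfB hom.
  split; [|split].
  - apply hplus_DqRA_frame_morphism; assumption.
  - intros Hsurj x y _ _. apply hplus_order_embedding_of_surj; assumption.
  - apply hplus_onto_Jinf_of_inj; assumption.
Qed.
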